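(* Consider the seven semantics Cog (cogent), CyCog (cyclically cogent), WAd (weakly admissible), WC (weakly complete), StrTen (strongly tenable), Ten (tenable), StaTen (statically tenable), and the directed graph on them with ''solid'' edges Cog$\to$CyCog, Cog$\to$WAd, Cog$\to$StrTen, StrTen$\to$Ten, Ten$\to$StaTen, and ''dashed'' edges StaTen$\to$WC, WAd$\to$WC. Then, restricted to finite argumentation frameworks: (i) For each solid edge $\sigma\to\tau$, every $\sigma$-extension of every finite AF is a $\tau$-extension; for each dashed edge $\sigma\to\tau$, every $\sigma$-extension of every finite AF is a subset of some $\tau$-extension. (Consequently these relations hold along directed paths, composing to inclusion-based refinement whenever a dashed edge is used.) (ii) For any ordered pair $(\sigma,\tau)$ of distinct semantics such that there is no directed path (using solid and dashed edges) from $\sigma$ to $\tau$, there exist a finite AF $\mathcal F$ and a set $A\in\sigma(\mathcal F)$ such that $A$ is not contained in any $\tau$-extension of $\mathcal F$. (iii) For any ordered pair $(\sigma,\tau)$ of distinct semantics such that there is no directed path from $\sigma$ to $\tau$ using only solid edges, there exist a finite AF $\mathcal F$ and a set $A\subseteq F$ with $A\in\sigma(\mathcal F)$ and $A\notin\tau(\mathcal F)$.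
   Context: An argumentation framework (AF) $\mathcal F=(F,\rightarrowtail)$ consists of a set $F$ of arguments and a binary attack relation $\rightarrowtail\subseteq F\times F$. An argument $a$ attacks a set $B$ if $a\rightarrowtail b$ for some $b\in B$. $A^+=\{x\in F:\exists a\in A,\ a\rightarrowtail x\}$. A set is conflict-free if none of its elements attacks one of its elements. For $A,B\subseteq F$, $A$ is as cogent as $B$, written $A\succeq B$, if $A$ is conflict-free and every $b\in B$ that attacks $A$ belongs to $A^+$. We write $B\succ A$ (and $A\prec B$) if $B\succeq A$ and not $A\succeq B$. A semantics $\sigma$ assigns to each AF a set $\sigma(\mathcal F)$ of subsets of $F$ (its $\sigma$-extensions). Cogent: $E$ is cogent if for every $D\subseteq F$, $D\succeq E$ implies $E\succeq D$. Cyclically cogent: $E$ is cyclically cogent if for every $D\subseteq F$ at least one holds: (1) $D\not\succeq E$; (2) $E\succeq D$; (3) there is a chain $D=D_1\prec D_2\prec\dots\prec D_n=E$. Weakly admissible (finite $F$): the $A$-reduct $\mathcal F^A$ is the restriction of $\mathcal F$ to $F\setminus(A\cup A^+)$; $A$ is weakly admissible if it is conflict-free and every $y\in F$ attacking $A$ belongs to no weakly admissible set of $\mathcal F^A$ (recursive definition). Weakly complete: a weakly complete labeling is a map $L:F\to\{\mathtt{in},\mathtt{out},\mathtt{undec}\}$ such that for every $a$: if $L(a)=\mathtt{in}$ then no attacker of $a$ is $\mathtt{in}$; if $L(a)=\mathtt{out}$ then some attacker of $a$ is $\mathtt{in}$; if $L(a)=\mathtt{undec}$ then some attacker of $a$ is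 $\mathtt{undec}$ and none is $\mathtt{in}$. A weakly complete extension is the set of $\mathtt{in}$-labeled arguments of such a labeling. Statically tenable: $A$ is statically tenable if for every finite conflict-free $B\subseteq F$ there is a conflict-free $C\supseteq A$ with $C\succeq B$. Strong tenability game: a strong tenability dispute is a finite sequence $(X_0,\dots,X_n)$ of subsets of $F$, even-indexed sets being moves of Pro and odd-indexed ones moves of Opp, such that (1) each $X_i$ is conflict-free; (2) $X_i\subseteq X_{i+2}$; (3) $X_1$ and each $X_{i+2}\setminus X_i$ are finite; (4) every Pro move $X_{2k}$ ($k\ge1$) satisfies $X_{2k}\succeq X_{2k-1}$; (5) every Opp move satisfies $X_{2k}\not\succeq X_{2k+1}$. Tenability game: same but with (4') $X_{i+1}\succeq X_i$ for all $i$ and (5') every Opp move satisfies $X_{2k+1}\succ X_{2k}$. Play starts with $X_0=A$; players alternately extend the dispute legally; a dispute with no legal extension is concluded and is won by the player who made the last move. A Pro strategy is winning if every concluded dispute from $X_0=A$ in which Pro follows it is won by Pro (infinite plays are Pro wins). $A$ is strongly tenable (resp. tenable) if Pro has a winning strategy in the strong tenability (resp. tenability) game from $X_0=A$. *)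

From mathcomp Require Import all_boot.
From Stdlib Require Import Relations.
Set Implicit Arguments. Unset Strict Implicit. Unset Printing Implicit Defensive.

Section AF.
Variable T : finType.
Variable att : rel T.   (* att a b  means  a attacks b *)

Definition attacks_set (a : T) (B : {set T}) : bool := [exists b in B, att a b].
Definition plus (A : {set T}) : {set T} := [set x | [exists a in A, att a x]].
Definition cf (A : {set T}) : bool := [forall a in A, forall b in A, ~~ att a b].
Definition cogent_as (A B : {set T}) : bool :=
  cf A && [forall b in B, attacks_set b A ==> (b \in plus A)].
Definition prec (A B : {set T}) : bool := cogent_as B A && ~~ cogent_as A B.

Definition cogent (E : {set T}) : Prop :=
  forall D : {set T}, cogent_as D E -> cogent_as E D.

Definition cyc_cogent (E : {set T}) : Prop :=
  forall D : {set T},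
    ~~ cogent_as D E \/ cogent_as E D \/
    exists s : seq {set T}, path prec D s /\ last D s = E.

(* U is the current (sub)framework (the restriction of
   att to U); reduct U A = U \ (A ∪ A^+).  The fuel n is >= #|U| in all
   recursive calls reached from wadm (A nonempty strictly shrinks U; if A is
   empty there is no attacker so the recursion is not consulted). *)
Definition reduct (U A : {set T}) : {set T} := U :\: (A :|: plus A).
Fixpoint wadm_f (n : nat) (U A : {set T}) : bool :=
  [&& A \subset U, cf A &
   [forall y in U, attacks_set y A ==>
      match n with
      | 0 => false
      | n'.+1 => [forall B : {set T}, (y \in B) ==> ~~ wadm_f n' (reduct U A) B]
      end]].
Definition wadm (A : {set T}) : bool := wadm_f #|T| setT A.

Inductive label := LIn | LOut | LUndec.
Definition wc_labeling (L : T -> label) : Prop :=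
  forall a : T,
    (L a = LIn -> forall b, att b a -> L b <> LIn) /\
    (L a = LOut -> exists b, att b a /\ L b = LIn) /\
    (L a = LUndec -> (exists b, att b a /\ L b = LUndec) /\
                     (forall b, att b a -> L b <> LIn)).
Definition wcomplete (A : {set T}) : Prop :=
  exists L : T -> label, wc_labeling L /\ forall a, a \in A <-> L a = LIn.

(* Statically tenable (all subsets are finite here) *)
Definition stat_tenable (A : {set T}) : Prop :=
  forall B : {set T}, cf B ->
    exists C : {set T}, A \subset C /\ cf C /\ cogent_as C B.

(* Games.  A dispute is a nonempty seq [:: X_0; ...; X_n]; index i is a Pro
   move iff i is even.  pro_ok prev cur constrains Pro moves X_{2k} (k>=1),
   opp_ok prev cur constrains Opp moves X_{2k+1}. *)
Definition dispute (pro_ok opp_ok : rel {set T}) (A : {set T}) (d : seq {set T}) : Prop :=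
  0 < size d /\ nth set0 d 0 = A /\
  (forall i, i < size d -> cf (nth set0 d i)) /\
  (forall i, i.+2 < size d -> nth set0 d i \subset nth set0 d i.+2) /\
  (forall i, i.+1 < size d ->
     if odd i.+1 then opp_ok (nth set0 d i) (nth set0 d i.+1)
     else pro_ok (nth set0 d i) (nth set0 d i.+1)).

Definition follows (st : seq {set T} -> {set T}) (d : seq {set T}) : Prop :=
  forall i, 0 < i < size d -> ~~ odd i -> nth set0 d i = st (take i d).

(* st is winning: whenever it is Pro's turn (last move by Opp) in a dispute
   following st, st's answer is a legal extension.  Hence no concluded dispute
   following st is won by Opp (infinite plays count as Pro wins). *)
Definition winning (pro_ok opp_ok : rel {set T}) (A : {set T})
    (st : seq {set T} -> {set T}) : Prop :=
  forall d, dispute pro_ok opp_ok A d -> follows st d -> ~~ odd (size d) ->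
    dispute pro_ok opp_ok A (rcons d (st d)).

Definition str_pro : rel {set T} := fun prev cur => cogent_as cur prev.
Definition str_opp : rel {set T} := fun prev cur => ~~ cogent_as prev cur.
Definition ten_pro : rel {set T} := fun prev cur => cogent_as cur prev.
Definition ten_opp : rel {set T} := fun prev cur => cogent_as cur prev && ~~ cogent_as prev cur.

(* The initial position (A) must itself be a legal dispute, i.e. A conflict-free *)
Definition str_tenable (A : {set T}) : Prop :=
  dispute str_pro str_opp A [:: A] /\ exists st, winning str_pro str_opp A st.
Definition tenable (A : {set T}) : Prop :=
  dispute ten_pro ten_opp A [:: A] /\ exists st, winning ten_pro ten_opp A st.

End AF.

Definition semantics := forall T : finType, rel T -> {set T} -> Prop.
Inductive sem7 := Cog | CyCog | WAd | WC | StrTen | Ten | StaTen.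

Definition interp (s : sem7) : semantics :=
  match s with
  | Cog => fun T att A => @cogent T att A
  | CyCog => fun T att A => @cyc_cogent T att A
  | WAd => fun T att A => @wadm T att A = true
  | WC => fun T att A => @wcomplete T att A
  | StrTen => fun T att A => @str_tenable T att A
  | Ten => fun T att A => @tenable T att A
  | StaTen => fun T att A => @stat_tenable T att A
  end.

Definition solid (s t : sem7) : Prop :=
  (s = Cog /\ t = CyCog) \/ (s = Cog /\ t = WAd) \/ (s = Cog /\ t = StrTen) \/
  (s = StrTen /\ t = Ten) \/ (s = Ten /\ t = StaTen).
Definition dashed (s t : sem7) : Prop :=
  (s = StaTen /\ t = WC) \/ (s = WAd /\ t = WC).
Definition edge (s t : sem7) : Prop := solid s t \/ dashed s t.
Arguments interp : clear implicits.

(* A cogent set beats every conflict-free challenger: Pro then wins both games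
   without moving, and no attacker of it survives in its reduct.  Given a winning
   Pro strategy for E, Pro's answer to the challenge B \ E^+ is a superset of E
   as cogent as B, whence static tenability.  A conflict-free set B is weakly
   complete iff every argument outside B and B^+ has an attacker outside B and B^+;
   maximal statically tenable supersets, and unions of a weakly admissible set with
   a maximal set admissible in its reduct, satisfy this.

   Separations propagate along the diagram, so the remaining statements reduce to
   ten separations and one strict one, each witnessed by a framework with at most
   six arguments.  There, membership of a set in a semantics and non-membership of
   all its supersets are decided by computing on lists; for the games this uses a
   table of Pro answers closed under Opp moves, resp. a bounded search for a
   winning Opp play. *)

From mathcomp Require Import all_boot zify.
From Stdlib Require Import Relations.
Set Implicit Arguments. Unset Strict Implicit. Unset Printing Implicit Defensive.

(** * Attacks, conflict-freeness and the semantics *)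

Section Framework.
Variables (T : finType) (att : rel T).
Implicit Types (A B C D E : {set T}) (x y a b : T).

Local Notation plus := (plus att).
Local Notation cf := (cf att).

Lemma plusP A x : reflect (exists2 a, a \in A & att a x) (x \in plus A).
Proof.
rewrite inE; apply: (iffP existsP) => [[a /andP [Aa]] | [a Aa ax]]; first by exists a.
by exists a; rewrite Aa.
Qed.

Lemma plusS A B : A \subset B -> plus A \subset plus B.
Proof.
move=> /subsetP sAB; apply/subsetP => x /plusP [a Aa ax].
by apply/plusP; exists a; first exact: sAB.
Qed.

Lemma plusU A B : plus (A :|: B) = plus A :|: plus B.
Proof.
apply/setP => x; rewrite in_setU; apply/plusP/orP => [[a] | [] /plusP [a Aa ax]].
- by case/setUP => Aa ax; [left | right]; apply/plusP; exists a.
- by exists a; rewrite ?inE ?Aa.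
- by exists a; rewrite ?inE ?Aa ?orbT.
Qed.

Lemma plus1 x y : (y \in plus [set x]) = att x y.
Proof.
by apply/plusP/idP => [[a /set1P -> //] | xy]; exists x; rewrite ?inE.
Qed.

Lemma cfP A : reflect {in A &, forall a b, ~~ att a b} (cf A).
Proof.
apply: (iffP forallP) => [cfA a b Aa Ab | cfA a].
  by move/implyP: (cfA a) => /(_ Aa) /forallP /(_ b) /implyP; apply.
by apply/implyP => Aa; apply/forallP => b; apply/implyP; apply: cfA.
Qed.

Lemma cf0 : cf set0.
Proof. by apply/cfP => a b; rewrite inE. Qed.

Lemma sub_cf A B : A \subset B -> cf B -> cf A.
Proof. by move=> /subsetP sAB /cfP cfB; apply/cfP => a b /sAB Ba /sAB; apply: cfB. Qed.

Lemma cf_notin_plus A x : cf A -> x \in A -> x \notin plus A.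
Proof. by move=> /cfP cfA Ax; apply/plusP => -[a Aa]; apply/negP; apply: cfA. Qed.

Lemma cogent_asP A B :
  reflect (cf A /\ forall b a, b \in B -> a \in A -> att b a -> b \in plus A)
          (cogent_as att A B).
Proof.
apply: (iffP andP) => [[cfA /forallP defA] | [cfA defA]]; split => //.
  move=> b a Bb Aa ba; move/implyP: (defA b) => /(_ Bb) /implyP; apply.
  by apply/existsP; exists a; rewrite Aa.
apply/forallP => b; apply/implyP => Bb; apply/implyP => /existsP [a /andP [Aa ba]].
exact: defA ba.
Qed.

Lemma cogent_as0 A : cogent_as att set0 A.
Proof. by apply/cogent_asP; split=> [|b a _]; rewrite ?cf0 ?inE. Qed.

Lemma cogent_as_of_defended E D : cf E ->
  (forall y a, a \in E -> att y a -> ~~ att y y -> y \in plus E) -> cf D -> cogent_as att E D.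
Proof.
move=> cfE defE /cfP cfD; apply/cogent_asP; split=> // b a Db Ea ba.
exact: defE Ea ba (cfD b b Db Db).
Qed.

(* Only conflict-free sets can challenge E, so E need only counter-attack those of
   its attackers that do not attack themselves. *)
Lemma cogentP E : cogent att E <->
  cf E /\ forall y a, a \in E -> att y a -> ~~ att y y -> y \in plus E.
Proof.
split=> [cogE | [cfE defE] D /cogent_asP [cfD _]]; last exact: cogent_as_of_defended.
have cfE : cf E by case/cogent_asP: (cogE _ (cogent_as0 E)).
split=> // y a Ea ya yy; apply/idPn => yE.
have /cogE/cogent_asP [_ /(_ y a)] : cogent_as att [set y] E.
  apply/cogent_asP; split=> [|b c Eb /set1P -> yb].
    by apply/cfP => u v /set1P -> /set1P ->.
  by rewrite plus1; apply: contraNT yE => _; apply/plusP; exists b.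
by rewrite inE eqxx (negbTE yE) => /(_ isT Ea ya).
Qed.

Lemma cogent_cogent_as E D : cogent att E -> cf D -> cogent_as att E D.
Proof. by case/cogentP; apply: cogent_as_of_defended. Qed.

Definition stat_tenableb A :=
  [forall D : {set T}, cf D ==> [exists C : {set T}, [&& A \subset C, cf C & cogent_as att C D]]].

Lemma stat_tenableP A : reflect (stat_tenable att A) (stat_tenableb A).
Proof.
apply: (iffP forallP) => [statA D cfD | statA D]; last first.
  apply/implyP => /statA [C [AC [cfC cogC]]].
  by apply/existsP; exists C; rewrite AC cfC cogC.
by move/implyP: (statA D) => /(_ cfD) /existsP [C /and3P [AC cfC cogC]]; exists C.
Qed.

(* A weakly complete labelling is determined by its [in] set B: its [out] arguments
   are exactly those of B^+. *)
Lemma wcompleteP B : wcomplete att B <->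
  cf B /\ forall x, x \notin B -> x \notin plus B ->
    exists y, [/\ att y x, y \notin B & y \notin plus B].
Proof.
split=> [[L [wcL inL]] | [cfB undecB]].
  have noInAtt a b : L a = LIn -> att b a -> L b <> LIn.
    by move=> La; case: (wcL a) => /(_ La) + _; apply.
  split=> [|x xB xP].
    by apply/cfP => a b /inL La /inL Lb; apply/negP => ab; exact: (noInAtt b a Lb ab La).
  have inP a : L a = LIn -> att a x -> False.
    by move=> /inL Ba ax; case/negP: xP; apply/plusP; exists a.
  case Lx: (L x).
  - by case/negP: xB; apply/inL.
  - by have [_ [/(_ Lx) [b [bx Lb]] _]] := wcL x; case: (inP b Lb bx).
  have [_ [_ /(_ Lx) [[y [yx Ly]] _]]] := wcL x.
  exists y; split=> //; first by apply/negP => /inL; rewrite Ly.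
  apply/plusP => -[b /inL Lb by_].
  by have [_ [_ /(_ Ly) [_ /(_ b by_)]]] := wcL y.
exists (fun a => if a \in B then LIn else if a \in plus B then LOut else LUndec).
split=> [a | a]; last by case: (a \in B); last case: (a \in plus B); split.
case Ba: (a \in B); last case Pa: (a \in plus B).
- split; last split; [move=> _ b ba | done | done].
  case: ifP => [Bb _ |]; last by case: ifP.
  by case/negP: (cf_notin_plus cfB Ba); apply/plusP; exists b.
- split; last split; [done | move=> _ | done].
  by case/plusP: Pa => b Bb ba; exists b; rewrite Bb.
- split; last split; [done | done | move=> _].
  have [y [ya yB yP]] := undecB a (negbT Ba) (negbT Pa).
  split; first by exists y; rewrite (negbTE yB) (negbTE yP).
  move=> b ba; case: ifP => [Bb _ |]; last by case: ifP.
  by case/negP: (negbT Pa); apply/plusP; exists b.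
Qed.

Lemma wcomplete_of_defended B : cf B ->
  (forall x, x \notin B -> x \notin plus B -> (forall y, att y x -> y \in plus B) -> False) ->
  wcomplete att B.
Proof.
move=> cfB maxB; apply/wcompleteP; split=> // x xB xP.
have [/existsP [y /andP [yx yP]] | /existsPn noY] := boolP [exists y, att y x && (y \notin plus B)].
  exists y; split=> //; apply: contraNN xP => By.
  by apply/plusP; exists y.
exfalso; apply: (maxB x xB xP) => y yx.
by move: (noY y); rewrite yx /= negbK.
Qed.

Lemma wadm_f_sub n U A : wadm_f att n U A -> A \subset U.
Proof. by case: n => [|n] /and3P []. Qed.

Lemma wadm_f_cf n U A : wadm_f att n U A -> cf A.
Proof. by case: n => [|n] /and3P []. Qed.

Lemma stat_tenable_cf A : stat_tenable att A -> cf A.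
Proof. by case/(_ set0 cf0) => C [sAC [cfC _]]; apply: sub_cf cfC. Qed.

End Framework.

(** * Disputes and strategies *)

Section Games.
Variables (T : finType) (att : rel T) (po oo : rel {set T}) (A : {set T}).
Implicit Types (d : seq {set T}) (P O Op X : {set T}).

Local Notation dispute := (dispute att po oo A).

(* Index [size d] of the new move is odd exactly when it is an Opp move. *)
Definition legal_move d X :=
  [/\ cf att X, 1 < size d -> nth set0 d (size d - 2) \subset X &
      if odd (size d) then oo (last set0 d) X else po (last set0 d) X].

Lemma dispute1 : cf att A -> dispute [:: A].
Proof. by move=> cfA; do 2!split=> //; split; [case | split; case]. Qed.

Lemma dispute_cf d : dispute d -> cf att A.
Proof. by case=> d_gt0 [<- [cf_d _]]; apply: cf_d. Qed.

Lemma dispute_rcons d X : dispute d -> dispute (rcons d X) <-> legal_move d X.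
Proof.
case=> d_gt0 [d0 [cf_d [sub_d rel_d]]]; rewrite /legal_move -nth_last.
have nthX i : nth set0 (rcons d X) i =
  if i < size d then nth set0 d i else if i == size d then X else set0.
  by rewrite nth_rcons.
split=> [[_ [_ [cf_dX [sub_dX rel_dX]]]] | [cfX subX relX]].
  split.
  - by have := cf_dX (size d); rewrite size_rcons nthX ltnn eqxx; apply.
  - move=> d_gt1; have := sub_dX (size d - 2); rewrite size_rcons !nthX.
    have -> : (size d - 2).+2 = size d by lia.
    by rewrite ltnn eqxx ifT; [apply | lia].
  - by have := rel_dX (size d).-1; rewrite size_rcons !nthX prednK // ltnn eqxx !leqnn; apply.
split; first by rewrite size_rcons.
split; first by rewrite nthX d_gt0.
split.
  move=> i; rewrite size_rcons ltnS leq_eqVlt nthX => /orP [/eqP -> | lti].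
    by rewrite ltnn eqxx.
  by rewrite lti; apply: cf_d.
split.
  move=> i; rewrite size_rcons ltnS leq_eqVlt !nthX => /orP [/eqP i2 | lti].
    rewrite i2 ltnn eqxx (_ : i < size d); last by lia.
    have -> : i = size d - 2 by lia.
    by apply: subX; lia.
  by rewrite lti (_ : i < size d) ?sub_d //; lia.
move=> i; rewrite size_rcons ltnS leq_eqVlt !nthX => /orP [/eqP i1 | lti].
  rewrite i1 ltnn eqxx leqnn.
  by have -> : i = (size d).-1 by lia.
by rewrite lti (_ : i < size d) ?rel_d //; lia.
Qed.

Lemma follows_rcons st d X : follows st d ->
  (0 < size d -> ~~ odd (size d) -> X = st d) -> follows st (rcons d X).
Proof.
move=> fd Xst i /andP [i_gt0]; rewrite size_rcons ltnS leq_eqVlt => /orP [/eqP Ei | lti] evi.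
  by subst i; rewrite nth_rcons ltnn eqxx -cats1 take_size_cat //; apply: Xst.
rewrite nth_rcons lti -cats1 takel_cat; last exact: ltnW.
by apply: fd => //; apply/andP.
Qed.

(* [opp_wins k P Op]: once Pro has played P, Opp (whose previous move was Op) can
   force a position where Pro is stuck within k rounds. *)
Fixpoint opp_wins k P Op : Prop :=
  if k is k'.+1 then exists O, [/\ cf att O, Op \subset O, oo P O &
    forall P', cf att P' -> P \subset P' -> po O P' -> opp_wins k' P' O]
  else False.

Lemma opp_wins_not_winning k st : cf att A -> opp_wins k A set0 -> ~ winning att po oo A st.
Proof.
move=> cfA win_k st_win.
suff no_win k' d Op : dispute d -> follows st d -> odd (size d) ->
    (1 < size d -> nth set0 d (size d - 2) = Op) -> ~ opp_wins k' (last set0 d) Op.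
  by apply: (no_win k [:: A] set0) => //; [exact: dispute1 | case].
elim: k' d Op => [|k' IH] d Op dd fd odd_d Opd [] // O [cfO OpO ooO winO].
have d_gt0 : 0 < size d by case: dd.
have dO : dispute (rcons d O).
  by apply/dispute_rcons => //; split=> //; [move=> /Opd -> | rewrite odd_d].
have fO : follows st (rcons d O) by apply: follows_rcons => // _; rewrite odd_d.
have := st_win _ dO fO; rewrite size_rcons /= odd_d => /(_ isT) dOP.
have [cfP subP poP] := (dispute_rcons _ dO).1 dOP.
move: subP poP; rewrite size_rcons /= odd_d /= last_rcons => /(_ d_gt0) subP poP.
have {}subP : last set0 d \subset st (rcons d O).
  have -> : last set0 d = nth set0 (rcons d O) ((size d).+1 - 2).
    by rewrite nth_rcons -nth_last ifT; [congr nth; lia | lia].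
  exact: subP.
apply: (IH _ O dOP); rewrite ?size_rcons /= ?odd_d ?last_rcons //.
- exact: follows_rcons.
- by rewrite subSS subSS subn0 nth_rcons size_rcons ltnSn nth_rcons ltnn eqxx.
- exact: winO.
Qed.

Lemma dispute_opp_move d k : dispute d -> (2 * k).+1 < size d ->
  [/\ cf att (nth set0 d (2 * k).+1),
      nth set0 (set0 :: d) (2 * k) \subset nth set0 d (2 * k).+1 &
      oo (nth set0 d (2 * k)) (nth set0 d (2 * k).+1)].
Proof.
case=> _ [_ [cf_d [sub_d rel_d]]] k_lt; split; first exact: cf_d.
  by case: k k_lt => [|k] k_lt; rewrite ?sub0set //= mulnS; apply: sub_d.
by have := rel_d _ k_lt; rewrite /= oddM.
Qed.

Section InvariantStrategy.
Variable inv : rel {set T}.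
Hypothesis inv0 : inv A set0.
Hypothesis inv_step : forall P Op O, inv P Op -> cf att O -> Op \subset O -> oo P O ->
  exists P', [/\ cf att P', P \subset P', po O P' & inv P' O].

Definition inv_strategy d : {set T} :=
  odflt set0 [pick P' | [&& cf att P', nth set0 d (size d - 2) \subset P',
     po (last set0 d) P' & inv P' (last set0 d)]].

Lemma inv_strategy_spec d P Op O :
  nth set0 d (size d - 2) = P -> last set0 d = O ->
  inv P Op -> cf att O -> Op \subset O -> oo P O ->
  [/\ cf att (inv_strategy d), P \subset inv_strategy d,
      po O (inv_strategy d) & inv (inv_strategy d) O].
Proof.
move=> <- <- invP cfO OpO ooO; have [P' [cfP' PP' poP' invP']] := inv_step invP cfO OpO ooO.
rewrite /inv_strategy; case: pickP => [Q /and4P [] // | /(_ P')].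
by rewrite cfP' PP' poP' invP'.
Qed.

(* The invariant holds between each Pro move X_2k and the preceding Opp move
   (the fictitious move set0 for k = 0). *)
Lemma inv_strategy_inv d k : dispute d -> follows inv_strategy d -> 2 * k < size d ->
  inv (nth set0 d (2 * k)) (nth set0 (set0 :: d) (2 * k)).
Proof.
move=> dd fd; elim: k => [|k IH] k_lt; first by case: dd => _ [-> _].
have [|cfO OpO ooO] := @dispute_opp_move d k dd; first lia.
have -> : 2 * k.+1 = (2 * k).+2 by lia.
set d' := take (2 * k).+2 d.
have size_d' : size d' = (2 * k).+2 by rewrite size_takel //; lia.
rewrite /= (fd (2 * k).+2); last by rewrite /= oddM.
- have nthP : nth set0 d' (size d' - 2) = nth set0 d (2 * k).
    by rewrite size_d' subSS subSS subn0 nth_take.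
  have lastO : last set0 d' = nth set0 d (2 * k).+1 by rewrite -nth_last size_d' nth_take.
  by case: (inv_strategy_spec nthP lastO (IH ltac:(lia)) cfO OpO ooO).
- by apply/andP; split=> //; lia.
Qed.

Lemma inv_strategy_winning : winning att po oo A inv_strategy.
Proof.
move=> d dd fd ev_d; have [k size_d] : exists k, size d = (2 * k).+2.
  exists (size d)./2.-1; move: (odd_double_half (size d)); case: dd => d_gt0 _.
  by rewrite (negbTE ev_d); lia.
have [|cfO OpO ooO] := @dispute_opp_move d k dd; first lia.
have nthP : nth set0 d (size d - 2) = nth set0 d (2 * k) by rewrite size_d subSS subSS subn0.
have lastO : last set0 d = nth set0 d (2 * k).+1 by rewrite -nth_last size_d.
have invk := @inv_strategy_inv d k dd fd ltac:(lia).
have [cfP subP poP _] := inv_strategy_spec nthP lastO invk cfO OpO ooO.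
apply/dispute_rcons => //; split; rewrite ?nthP ?(negbTE ev_d) ?lastO //.
Qed.
End InvariantStrategy.

End Games.

Lemma dispute_sub_opp (T : finType) (att : rel T) (po oo oo' : rel {set T}) A d :
  subrel oo oo' -> dispute att po oo A d -> dispute att po oo' A d.
Proof.
move=> sub_oo [d_gt0 [d0 [cf_d [sub_d rel_d]]]]; do 4!split=> //.
by move=> i /rel_d; case: ifP => // _; apply: sub_oo.
Qed.

(** * The implications of the diagram *)

Section Implications.
Variables (T : finType) (att : rel T).
Implicit Types (A B C D E G U : {set T}) (x y a b : T).

Local Notation plus := (plus att).
Local Notation cf := (cf att).

Lemma cogent_cyc_cogent E : cogent att E -> cyc_cogent att E.
Proof. by move=> cogE D; case DE: (cogent_as att D E); [right; left; apply: cogE | left]. Qed.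

Lemma cogent_wadm E : cogent att E -> wadm att E.
Proof.
case/cogentP => cfE defE; rewrite /wadm.
have [T0 | T_gt0] := eqVneq #|T| 0.
  rewrite T0 /= subsetT cfE /=; apply/forall_inP => y _.
  by have := card0_eq T0 y; rewrite !inE.
rewrite -(prednK (_ : 0 < #|T|)) ?lt0n //= subsetT cfE /=; apply/forall_inP => y _.
apply/implyP => /existsP [a /andP [Ea ya]]; apply/forallP => B; apply/implyP => By.
apply/negP => wadmB; case yy: (att y y).
  by move/cfP: (wadm_f_cf wadmB) => /(_ y y By By); rewrite yy.
have := subsetP (wadm_f_sub wadmB) y By.
by rewrite in_setD in_setU (defE y a Ea ya (negbT yy)) orbT.
Qed.

Lemma cogent_str_tenable E : cogent att E -> str_tenable att E.
Proof.
move=> cogE; split; first by apply: dispute1; case/cogentP: cogE.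
exists (fun=> set0) => d dd _ ev_d.
have d_gt1 : (2 * 0).+1 < size d.
  by case: dd => d_gt0 _; move: ev_d d_gt0; case: (size d) => [|[|]].
have [cfX1 _] := dispute_opp_move dd d_gt1.
by case: dd => _ [-> _]; rewrite /str_opp cogent_cogent_as.
Qed.

Lemma str_tenable_tenable E : str_tenable att E -> tenable att E.
Proof.
case=> dE [st st_win]; split; first by apply: dispute1; apply: dispute_cf dE.
exists st => d dd fd ev_d.
have dd' : dispute att (str_pro att) (str_opp att) E d.
  by apply: dispute_sub_opp dd => X Y /andP [].
have /(dispute_rcons _ dd') [cfP subP poP] := st_win d dd' fd ev_d.
by apply/dispute_rcons => //; split; rewrite ?(negbTE ev_d) in poP *.
Qed.

(* Unless E itself is as cogent as B \ E^+, that set is a legal Opp move, and Pro's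
   answer to it is as cogent as B, since E already attacks B :&: E^+. *)
Lemma tenable_stat_tenable E : tenable att E -> stat_tenable att E.
Proof.
case=> dE [st st_win]; have cfE := dispute_cf dE => B cfB.
pose B' := B :\: plus E.
have cfB' : cf B' by apply: sub_cf cfB; apply: subsetDl.
have cogB C : E \subset C -> cogent_as att C B' -> cogent_as att C B.
  move=> EC /cogent_asP [cfC defC]; apply/cogent_asP; split=> // b a Bb Ca ba.
  case Pb: (b \in plus E); first exact: subsetP (plusS att EC) b Pb.
  by apply: defC ba; rewrite // inE Pb.
have [EB' | nEB'] := boolP (cogent_as att E B').
  by exists E; split; [exact: subxx | split; last exact: cogB].
have dB : dispute att (ten_pro att) (ten_opp att) E [:: E; B'].
  apply/(dispute_rcons _ dE); split=> //=; rewrite /ten_opp nEB' andbT.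
  apply/cogent_asP; split=> // e b Ee B'b eb; exfalso; move: B'b; rewrite inE.
  by case/andP => /negP nPb _; apply: nPb; apply/plusP; exists e.
have fB : follows st [:: E; B'] by case=> [|[|]].
have [cfC /(_ isT) /= EC cogC] := (dispute_rcons _ dB).1 (st_win _ dB fB isT).
by exists (st [:: E; B']); split; last split; last exact: cogB.
Qed.

Lemma stat_tenable_setU1 B x : stat_tenable att B -> x \notin plus B ->
  (forall y, att y x -> y \in plus B) -> stat_tenable att (x |: B).
Proof.
move=> statB xP defx D cfD.
(* Challenge B with x and the part of D not interacting with x; the rest of D
   attacks x, hence lies in B^+, or is attacked by x. *)
have xx : ~~ att x x by apply: contraNN xP => /defx.
pose D' := x |: [set d in D | ~~ att d x && ~~ att x d].
have cfD' : cf D'.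
  apply/cfP => a b; rewrite !inE => /predU1P [-> | /and3P [Da ax xa]].
    by case/predU1P => [-> | /and3P [_ _]].
  by case/predU1P => [-> // | /and3P [Db _ _]]; move/cfP: cfD; apply.
have [C [BC [cfC /cogent_asP [_ cogC]]]] := statB D' cfD'.
have xPC : x \notin plus C.
  apply/plusP => -[c Cc /defx /plusP [b Bb bc]].
  by move/cfP: cfC => /(_ b c (subsetP BC b Bb) Cc); rewrite bc.
have xC c : c \in C -> ~~ att x c.
  by move=> Cc; apply: contraNN xPC => xc; apply: cogC xc; rewrite ?setU11.
have cfxC : cf (x |: C).
  apply/cfP => a b; rewrite !inE => /predU1P [-> | Ca] /predU1P [-> | Cb] //.
  - exact: xC.
  - by apply: contraNN xPC => ax; apply/plusP; exists a.
  - by move/cfP: cfC; apply.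
exists (x |: C); split; first exact: setUS.
split=> //; apply/cogent_asP; split=> // b a Db Ca ba.
have plusC : plus C \subset plus (x |: C) by apply: plusS; apply: subsetUr.
case bx: (att b x).
  by apply: subsetP (plusS att (subset_trans BC (subsetUr [set x] C))) _ (defx b bx).
case xb: (att x b); first by apply/plusP; exists x; rewrite ?setU11.
have D'b : b \in D' by rewrite !inE Db bx xb orbT.
move: Ca; rewrite in_setU1 => /predU1P [ax | Ca]; first by rewrite ax bx in ba.
exact: subsetP plusC _ (cogC b a D'b Ca ba).
Qed.

Lemma stat_tenable_wcomplete E : stat_tenable att E -> exists B, wcomplete att B /\ E \subset B.
Proof.
move/stat_tenableP => statE.
have [B /maxsetP [/stat_tenableP statB maxB] EB] := maxset_exists statE.
exists B; split=> //; apply: wcomplete_of_defended (stat_tenable_cf statB) _ => x xB xP defx.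
have /stat_tenableP/maxB/(_ (subsetUr _ _)) xBB := stat_tenable_setU1 statB xP defx.
by move: xB; rewrite -xBB setU11.
Qed.

Definition adm_in U G :=
  [&& G \subset U, cf G & [forall y in U, [forall g in G, att y g ==> (y \in plus G)]]].

Lemma adm_in_wadm_f n U G : adm_in U G -> wadm_f att n.+1 U G.
Proof.
case/and3P => GU cfG /forallP defG /=; rewrite GU cfG /=.
apply/forallP => y; apply/implyP => Uy; apply/implyP => /existsP [g /andP [Gg yg]].
have yP : y \in plus G by move/implyP: (defG y) => /(_ Uy) /forallP /(_ g); rewrite Gg yg.
apply/forallP => B; apply/implyP => By; apply/negP => /wadm_f_sub /subsetP /(_ y By).
by rewrite in_setD in_setU yP orbT.
Qed.

Lemma adm_in_setU1 U G x : adm_in U G -> x \in U -> x \notin plus G ->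
  (forall y, y \in U -> att y x -> y \in plus G) -> adm_in U (x |: G).
Proof.
case/and3P => GU cfG /forallP defG Ux xP defx.
have plusG : plus G \subset plus (x |: G) by apply: plusS; apply: subsetUr.
have defG' y g : y \in U -> g \in G -> att y g -> y \in plus G.
  by move=> Uy Gg yg; move/implyP: (defG y) => /(_ Uy) /forallP /(_ g); rewrite Gg yg.
apply/and3P; split.
- by rewrite subUset sub1set Ux.
- apply/cfP => a b; rewrite !inE => /predU1P [-> | Ga] /predU1P [-> | Gb].
  + by apply: contraNN xP => /(defx x Ux).
  + by apply: contraNN xP => /(defG' x b Ux Gb).
  + by apply: contraNN xP => ax; apply/plusP; exists a.
  + by move/cfP: cfG; apply.
apply/forallP => y; apply/implyP => Uy; apply/forallP => g; apply/implyP.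
rewrite in_setU1 => /predU1P [-> | Gg]; apply/implyP => yg.
  exact: subsetP plusG _ (defx y Uy yg).
exact: subsetP plusG _ (defG' y g Uy Gg yg).
Qed.

(* The maximal extension G of E that is admissible in the reduct cannot attack E,
   since its members would then lie in a weakly admissible set of the reduct. *)
Lemma wadm_wcomplete E : wadm att E -> exists B, wcomplete att B /\ E \subset B.
Proof.
move=> wadmE; have cfE := wadm_f_cf wadmE.
pose U := reduct att setT E.
have UP x : (x \in U) = (x \notin E) && (x \notin plus E).
  by rewrite in_setD in_setU negb_or in_setT andbT.
have adm0 : adm_in U set0.
  by rewrite /adm_in sub0set cf0; apply/forall_inP => y _; apply/forall_inP => g; rewrite inE.
have [G /maxsetP [admG maxG] _] := maxset_exists adm0.
have /and3P [GU cfG _] := admG.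
have GE g a : g \in G -> a \in E -> ~~ att g a.
  move=> Gg Ea; apply/negP => ga; have := subsetP GU g Gg; rewrite UP => /andP [gE gP].
  have : 1 < #|T|.
    apply: leq_trans (max_card [set a; g]); rewrite cards2 ltnS lt0b.
    by apply/eqP => ag; rewrite -ag Ea in gE.
  have gEatt : attacks_set att g E by apply/existsP; exists a; rewrite Ea.
  move: wadmE; rewrite /wadm; case: #|T| => [|[|n]] // /and3P [_ _].
  move=> /forall_inP /(_ g (in_setT g)); rewrite gEatt => /forallP /(_ G).
  by rewrite Gg /= => /negP []; exact: adm_in_wadm_f.
exists (E :|: G); split; last exact: subsetUl.
apply: wcomplete_of_defended => [| x].
  apply/cfP => a b; rewrite !inE => /orP [Ea | Ga] /orP [Eb | Gb].
  - by move/cfP: cfE; apply.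
  - apply: contraTN (subsetP GU b Gb) => ab; rewrite UP negb_and !negbK.
    by apply/orP; right; apply/plusP; exists a.
  - exact: GE.
  - by move/cfP: cfG; apply.
rewrite in_setU negb_or plusU in_setU negb_or => /andP [xE xG] /andP [xPE xPG] defx.
have Ux : x \in U by rewrite UP xE.
have defx' y : y \in U -> att y x -> y \in plus G.
  move=> Uy /defx; rewrite in_setU; case/orP => // yPE.
  by move: Uy; rewrite UP yPE andbF.
have /maxG/(_ (subsetUr _ _)) xGG := adm_in_setU1 admG Ux xPG defx'.
by move: xG; rewrite -xGG setU11.
Qed.

End Implications.

Lemma solid_refines s t : solid s t ->
  forall (T : finType) (att : rel T) (A : {set T}), interp s T att A -> interp t T att A.
Proof.
case=> [[-> ->] | [[-> ->] | [[-> ->] | [[-> ->] | [-> ->]]]]] T att A /=.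
- exact: cogent_cyc_cogent.
- exact: cogent_wadm.
- exact: cogent_str_tenable.
- exact: str_tenable_tenable.
- exact: tenable_stat_tenable.
Qed.

Lemma dashed_refines s t : dashed s t ->
  forall (T : finType) (att : rel T) (A : {set T}),
    interp s T att A -> exists B, interp t T att B /\ A \subset B.
Proof.
case=> [[-> ->] | [-> ->]] T att A /=; [exact: stat_tenable_wcomplete | exact: wadm_wcomplete].
Qed.

Lemma edge_refines s t : clos_refl_trans sem7 edge s t ->
  forall (T : finType) (att : rel T) (A : {set T}),
    interp s T att A -> exists B, interp t T att B /\ A \subset B.
Proof.
elim=> {s t} [s t [st | st] | s | s u t _ IHsu _ IHut] T att A As.
- by exists A; split; first exact: solid_refines st _ _ _ As.
- exact: dashed_refines st _ _ _ As.
- by exists A.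
have [B [Bu AB]] := IHsu T att A As; have [C [Ct BC]] := IHut T att B Bu.
by exists C; split; last exact: subset_trans BC.
Qed.

Lemma solid_path_refines s t : clos_refl_trans sem7 solid s t ->
  forall (T : finType) (att : rel T) (A : {set T}), interp s T att A -> interp t T att A.
Proof.
elim=> {s t} [s t /solid_refines | s | s u t _ IHsu _ IHut] // T att A As.
exact/IHut/IHsu.
Qed.

(** * Deciding the semantics on enumerated frameworks *)

Fixpoint sublists (T : Type) (s : seq T) : seq (seq T) :=
  if s is x :: s' then sublists s' ++ map (cons x) (sublists s') else [:: [::]].

Lemma filter_sublists (T : eqType) (p : pred T) s : filter p s \in sublists s.
Proof.
elim: s => //= x s IH; rewrite mem_cat; case: (p x); last by rewrite IH.
by rewrite map_f ?orbT.
Qed.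

Section Decide.
Variables (T : finType) (att : rel T) (e : seq T).
Hypothesis e_full : forall x, x \in e.
Implicit Types (l m u : seq T) (X : {set T}).

Local Notation subs := (sublists e).

(* Sets of a framework enumerated by [e] are represented by lists; [canon X] is the
   canonical representative of X.  The [_seq] functions compute the corresponding
   set-level notions by [vm_compute], which cannot evaluate finite sets directly. *)
Definition canon X := [seq x <- e | x \in X].

Lemma canon_sublists X : canon X \in subs.
Proof. exact: filter_sublists. Qed.

Lemma canonK X : [set x in canon X] = X.
Proof. by apply/setP => x; rewrite inE mem_filter e_full andbT. Qed.

Lemma forall_setsE (P : pred {set T}) : [forall X, P X] = all (fun l => P [set x in l]) subs.
Proof.
apply/forallP/allP => [PX l _ | Pl X]; first exact: PX.
by rewrite -(canonK X); apply: Pl; apply: canon_sublists.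
Qed.

Lemma exists_setsE (P : pred {set T}) : [exists X, P X] = has (fun l => P [set x in l]) subs.
Proof. by apply/negb_inj; rewrite negb_exists forall_setsE -all_predC. Qed.

Lemma forall_in_seqE (p : pred T) l : [forall x in [set y in l], p x] = all p l.
Proof.
apply/forall_inP/allP => [pl x xl | pl x]; first by apply: pl; rewrite inE.
by rewrite inE; apply: pl.
Qed.

Lemma exists_in_seqE (p : pred T) l : [exists x in [set y in l], p x] = has p l.
Proof. by apply/negb_inj; rewrite negb_exists_in forall_in_seqE -all_predC. Qed.

Definition plus_seq l x := has (att^~ x) l.
Definition cf_seq l := all (fun a => all (fun b => ~~ att a b) l) l.
Definition cogent_as_seq l m := cf_seq l && all (fun b => has (att b) l ==> plus_seq l b) m.
Definition subset_seq l m := all (fun x => x \in m) l.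
Definition prec_seq l m := cogent_as_seq m l && ~~ cogent_as_seq l m.

Lemma plus_seqE l x : (x \in plus att [set y in l]) = plus_seq l x.
Proof. by rewrite inE exists_in_seqE. Qed.

Lemma cf_seqE l : cf att [set x in l] = cf_seq l.
Proof. by rewrite /cf forall_in_seqE; apply: eq_all => a; rewrite forall_in_seqE. Qed.

Lemma cogent_as_seqE l m : cogent_as att [set x in l] [set x in m] = cogent_as_seq l m.
Proof.
rewrite /cogent_as cf_seqE forall_in_seqE; congr andb; apply: eq_all => b.
by rewrite /attacks_set exists_in_seqE plus_seqE.
Qed.

Lemma subset_seqE l m : ([set x in l] \subset [set x in m]) = subset_seq l m.
Proof.
apply/subsetP/allP => [lm x xl | lm x]; first by have := lm x; rewrite !inE; apply.
by rewrite !inE; apply: lm.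
Qed.

Lemma prec_seqE l m : prec att [set x in l] [set x in m] = prec_seq l m.
Proof. by rewrite /prec !cogent_as_seqE. Qed.

Lemma no_superset_seq (Q : {set T} -> Prop) (q : pred (seq T)) a :
  (forall l, q l -> ~ Q [set x in l]) -> all q [seq l <- subs | subset_seq a l] ->
  forall B, Q B -> ~ [set x in a] \subset B.
Proof.
move=> qQ /allP aq B; rewrite -(canonK B) subset_seqE => QB al; apply: qQ QB.
by apply: aq; rewrite mem_filter al canon_sublists.
Qed.

Definition stat_tenable_seq l :=
  all (fun m => cf_seq m ==> has (fun c => [&& subset_seq l c, cf_seq c & cogent_as_seq c m]) subs)
      subs.

Lemma stat_tenable_seqP l : reflect (stat_tenable att [set x in l]) (stat_tenable_seq l).
Proof.
suff <- : stat_tenableb att [set x in l] = stat_tenable_seq l by apply: stat_tenableP.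
rewrite /stat_tenableb forall_setsE; apply: eq_all => m; rewrite cf_seqE exists_setsE.
by congr (_ ==> _); apply: eq_has => c; rewrite subset_seqE cf_seqE cogent_as_seqE.
Qed.

Definition wcomplete_seq l :=
  cf_seq l && all (fun x => (x \notin l) && ~~ plus_seq l x ==>
                    has (fun y => [&& att y x, y \notin l & ~~ plus_seq l y]) e) e.

Lemma wcomplete_seqP l : reflect (wcomplete att [set x in l]) (wcomplete_seq l).
Proof.
apply: (iffP idP) => [/andP [cfl /allP undecl] | /wcompleteP [cfl undecl]].
  apply/wcompleteP; rewrite cf_seqE; split=> // x; rewrite inE plus_seqE => xl xP.
  move/implyP: (undecl x (e_full x)); rewrite xl xP => /(_ isT) /hasP [y _ /and3P [yx yl yP]].
  by exists y; rewrite inE plus_seqE.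
rewrite /wcomplete_seq -cf_seqE cfl; apply/allP => x _; apply/implyP => /andP [xl xP].
have [||y [yx]] := undecl x; rewrite ?plus_seqE ?inE // => yl yP.
by apply/hasP; exists y; rewrite ?e_full // yx yl.
Qed.

Definition reduct_seq u l := [seq x <- u | (x \notin l) && ~~ plus_seq l x].

Fixpoint wadm_seq n u l :=
  [&& subset_seq l u, cf_seq l &
   all (fun y => if n is n'.+1 then
                   all (fun m => ~~ wadm_seq n' (reduct_seq u l) m) [seq m <- subs | y \in m]
                 else false)
       [seq y <- u | has (att y) l]].

Lemma wadm_f_seqE n u l : wadm_f att n [set x in u] [set x in l] = wadm_seq n u l.
Proof.
elim: n u l => [|n IH] u l /=; rewrite subset_seqE cf_seqE forall_in_seqE all_filter;
  congr [&& _, _ & _]; apply: eq_all => y; rewrite /attacks_set exists_in_seqE //=.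
have -> : reduct att [set x in u] [set x in l] = [set x in reduct_seq u l].
  apply/setP => x; rewrite in_setD in_setU plus_seqE !inE mem_filter negb_or.
  by rewrite andbC.
rewrite forall_setsE all_filter; congr (_ ==> _); apply: eq_all => m.
by rewrite inE IH.
Qed.

Lemma wadm_seqE l : wadm att [set x in l] = wadm_seq #|T| e l.
Proof.
by rewrite /wadm -wadm_f_seqE; congr wadm_f; apply/setP => x; rewrite !inE e_full.
Qed.

Definition canon_seq l := [seq x <- e | x \in l].

Lemma canon_setE l : canon [set x in l] = canon_seq l.
Proof. by apply: eq_filter => x; rewrite inE. Qed.

Definition prec_closed (R : seq (seq T)) :=
  all (fun m => all (fun m' => m' \in R) [seq m' <- subs | prec_seq m m']) R.

(* Closure of [l] under the successors for [prec_seq], iterated often enough to be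
   closed; closedness is checked separately by [prec_closed]. *)
Definition prec_reach l : seq (seq T) :=
  iter (size subs) (fun R => R ++ [seq m <- subs | has (prec_seq^~ m) R & m \notin R]) [:: l].

Definition not_cyc_cogent_seq l :=
  has (fun D => let R := prec_reach (canon_seq D) in prec_closed R && (canon_seq l \notin R))
      [seq D <- subs | prec_seq l D].

Lemma mem_prec_reach l : l \in prec_reach l.
Proof. by rewrite /prec_reach; elim: (size subs) => [|n IH] /=; rewrite ?mem_seq1 ?mem_cat ?IH. Qed.

Lemma prec_closed_path R X s : prec_closed R -> canon X \in R -> path (prec att) X s ->
  canon (last X s) \in R.
Proof.
move=> /allP closedR; elim: s X => [|Y s IH] X //= XR /andP [XY pathY]; apply: IH => //.
move/allP: (closedR _ XR); apply; rewrite mem_filter canon_sublists andbT.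
by rewrite -prec_seqE !canonK.
Qed.

Lemma not_cyc_cogent_seqP l : not_cyc_cogent_seq l -> ~ cyc_cogent att [set x in l].
Proof.
case/hasP => D; rewrite mem_filter => /andP [/andP [Dl nlD] _] /andP [closedR lR].
move/(_ [set x in D]); rewrite !cogent_as_seqE Dl (negbTE nlD).
case=> // [] [] // [s [pathD lastD]].
have := prec_closed_path closedR _ pathD; rewrite lastD !canon_setE (negbTE lR).
by rewrite mem_prec_reach => /(_ isT).
Qed.

Section GameDecide.
Variables (po oo : rel {set T}) (pos oos : rel (seq T)).
Hypotheses (posE : forall l m, po [set x in l] [set x in m] = pos l m)
           (oosE : forall l m, oo [set x in l] [set x in m] = oos l m).

Definition opp_move_seq p op o := [&& cf_seq o, subset_seq op o & oos p o].
Definition pro_move_seq o p p' := [&& cf_seq p', subset_seq p p' & pos o p'].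

Lemma opp_move_seqE p op o : opp_move_seq p op o =
  [&& cf att [set x in o], [set x in op] \subset [set x in o] & oo [set x in p] [set x in o]].
Proof. by rewrite cf_seqE subset_seqE oosE. Qed.

Lemma pro_move_seqE o p p' : pro_move_seq o p p' =
  [&& cf att [set x in p'], [set x in p] \subset [set x in p'] & po [set x in o] [set x in p']].
Proof. by rewrite cf_seqE subset_seqE posE. Qed.

(* Opp's moves are searched among the candidates [cands] only. *)
Fixpoint opp_wins_seq (cands : seq (seq T)) k p op :=
  if k is k'.+1 then
    has (fun o => all (fun p' => opp_wins_seq cands k' p' o)
                      [seq p' <- subs | pro_move_seq o p p'])
        [seq o <- cands | opp_move_seq p op o]
  else false.

Lemma opp_wins_seqP cands k p op :
  opp_wins_seq cands k p op -> opp_wins att po oo k [set x in p] [set x in op].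
Proof.
elim: k p op => [|k IH] p op //= /hasP [o]; rewrite mem_filter opp_move_seqE.
case/andP => /and3P [cfo opo oso] _ /allP wino.
exists [set x in o]; split=> // P' cfP' pP' poP'.
rewrite -(canonK P'); apply/IH/wino; rewrite mem_filter canon_sublists andbT.
by rewrite pro_move_seqE canonK cfP' pP' poP'.
Qed.

Lemma game_lost_seq cands k l : ~~ cf_seq l || opp_wins_seq cands k l [::] ->
  ~ (dispute att po oo [set x in l] [:: [set x in l]] /\
     exists st, winning att po oo [set x in l] st).
Proof.
move=> lost [dl [st st_win]]; have := dispute_cf dl; rewrite cf_seqE.
move: lost => /orP [/negbTE -> // | /opp_wins_seqP lost] cfl.
have lost0 : opp_wins att po oo k [set x in l] set0.
  by have -> : set0 = [set x in [::] : seq T] by apply/setP => x; rewrite !inE.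
by apply: (opp_wins_not_winning _ lost0 st_win); rewrite cf_seqE.
Qed.

(* [I] lists pairs (Pro's move, Opp's preceding move) such that Pro can answer
   every legal Opp move from such a pair so as to reach a pair of [I] again. *)
Definition pro_invariant_seq (I : seq (seq T * seq T)) :=
  all (fun pr => all (fun o => has (fun p' => (p', o) \in I)
                                   [seq p' <- subs | pro_move_seq o pr.1 p'])
                     [seq o <- subs | opp_move_seq pr.1 pr.2 o]) I.

Lemma game_won_seq I a : cf_seq a -> (a, [::]) \in I -> pro_invariant_seq I ->
  dispute att po oo [set x in a] [:: [set x in a]] /\
  exists st, winning att po oo [set x in a] st.
Proof.
rewrite -cf_seqE => cfa aI /allP invI; split; first exact: dispute1.
pose inv P Op := has (fun pr => (P == [set x in pr.1]) && (Op == [set x in pr.2])) I.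
exists (inv_strategy att po inv); apply: inv_strategy_winning => //.
  by apply/hasP; exists (a, [::]); rewrite //= eqxx; apply/eqP/setP => x; rewrite !inE.
move=> P Op O /hasP [[p op] pI /andP [/eqP -> /eqP ->]] cfO opO ooO.
have opp_o : opp_move_seq p op (canon O) by rewrite opp_move_seqE canonK cfO opO ooO.
move/allP: (invI _ pI) => /(_ (canon O)); rewrite mem_filter opp_o canon_sublists.
case/(_ isT)/hasP => p'; rewrite mem_filter pro_move_seqE.
case/andP => /and3P [cfp' pp' pop'] _ p'I.
exists [set x in p']; rewrite canonK in pop'; split=> //.
by apply/hasP; exists (p', canon O); rewrite //= eqxx canonK eqxx.
Qed.

End GameDecide.

Lemma no_wcomplete_superset a :
  all (fun l => ~~ wcomplete_seq l) [seq l <- subs | subset_seq a l] ->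
  forall B, wcomplete att B -> ~ [set x in a] \subset B.
Proof. by apply: no_superset_seq => l /negP nwc /wcomplete_seqP. Qed.

Lemma no_cyc_cogent_superset a : all not_cyc_cogent_seq [seq l <- subs | subset_seq a l] ->
  forall B, cyc_cogent att B -> ~ [set x in a] \subset B.
Proof. exact/no_superset_seq/not_cyc_cogent_seqP. Qed.

Lemma no_wadm_superset n a : #|T| = n ->
  all (fun l => ~~ wadm_seq n e l) [seq l <- subs | subset_seq a l] ->
  forall B, wadm att B -> ~ [set x in a] \subset B.
Proof. by move=> <-; apply: no_superset_seq => l; rewrite -wadm_seqE => /negbTE ->. Qed.

Lemma no_stat_tenable_superset a :
  all (fun l => ~~ stat_tenable_seq l) [seq l <- subs | subset_seq a l] ->
  forall B, stat_tenable att B -> ~ [set x in a] \subset B.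
Proof. by apply: no_superset_seq => l /negP nst /stat_tenable_seqP. Qed.

Definition pro_seq l m := cogent_as_seq m l.
Definition str_opp_seq l m := ~~ cogent_as_seq l m.

Lemma pro_seqE l m : str_pro att [set x in l] [set x in m] = pro_seq l m.
Proof. exact: cogent_as_seqE. Qed.

Lemma str_opp_seqE l m : str_opp att [set x in l] [set x in m] = str_opp_seq l m.
Proof. by rewrite /str_opp cogent_as_seqE. Qed.

Lemma ten_opp_seqE l m : ten_opp att [set x in l] [set x in m] = prec_seq l m.
Proof. exact: prec_seqE. Qed.

Lemma str_tenable_seq I a : cf_seq a -> (a, [::]) \in I ->
  pro_invariant_seq pro_seq str_opp_seq I -> str_tenable att [set x in a].
Proof. exact: (@game_won_seq (str_pro att) (str_opp att) _ _ pro_seqE str_opp_seqE). Qed.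

Lemma tenable_seq I a : cf_seq a -> (a, [::]) \in I ->
  pro_invariant_seq pro_seq prec_seq I -> tenable att [set x in a].
Proof. exact: (@game_won_seq (ten_pro att) (ten_opp att) _ _ pro_seqE ten_opp_seqE). Qed.

Lemma no_str_tenable_superset cands k a :
  all (fun l => ~~ cf_seq l || opp_wins_seq pro_seq str_opp_seq cands k l [::])
      [seq l <- subs | subset_seq a l] ->
  forall B, str_tenable att B -> ~ [set x in a] \subset B.
Proof.
apply: no_superset_seq => l.
exact: (@game_lost_seq (str_pro att) (str_opp att) _ _ pro_seqE str_opp_seqE).
Qed.

Lemma no_tenable_superset cands k a :
  all (fun l => ~~ cf_seq l || opp_wins_seq pro_seq prec_seq cands k l [::])
      [seq l <- subs | subset_seq a l] ->
  forall B, tenable att B -> ~ [set x in a] \subset B.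
Proof.
apply: no_superset_seq => l.
exact: (@game_lost_seq (ten_pro att) (ten_opp att) _ _ pro_seqE ten_opp_seqE).
Qed.

End Decide.

(** * Counterexamples *)

Fixpoint ords n : seq 'I_n := if n is n'.+1 then ord0 :: map (lift ord0) (ords n') else [::].

Lemma mem_ords n (x : 'I_n) : x \in ords n.
Proof.
elim: n x => [[] //| n IH] x /=; rewrite inE.
by case: (unliftP ord0 x) => [j -> | ->]; rewrite ?eqxx // mem_map ?IH ?orbT //; apply: lift_inj.
Qed.

Definition af n (E : seq (nat * nat)) : rel 'I_n := fun x y => (val x, val y) \in E.
Definition args n (ns : seq nat) : seq 'I_n := [seq x <- ords n | val x \in ns].
Arguments af : clear implicits.
Arguments args : clear implicits.

Definition af_cyc := af 3 [:: (0, 1); (1, 2); (2, 0)].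

Lemma af_cyc_cyc_cogent : cyc_cogent af_cyc [set x in args 3 [:: 0]].
Proof.
(* The only challenger of {0} that it does not beat is {2}, and {2} < {1} < {0}. *)
have cases : all (fun m => [|| ~~ cogent_as_seq af_cyc m (args 3 [:: 0]),
    cogent_as_seq af_cyc (args 3 [:: 0]) m | m == args 3 [:: 2]]) (sublists (ords 3)).
  by vm_compute.
move=> D; rewrite -(canonK (@mem_ords 3) D) !cogent_as_seqE.
move/allP: cases => /(_ _ (canon_sublists _ D)) /or3P [-> | -> | /eqP ->].
- by left.
- by right; left.
right; right; exists [:: [set x in args 3 [:: 1]]; [set x in args 3 [:: 0]]].
by rewrite /= !prec_seqE; vm_compute.
Qed.

Lemma af_cyc_no_wcomplete B : wcomplete af_cyc B -> ~ [set x in args 3 [:: 0]] \subset B.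
Proof. by move: B; apply: (no_wcomplete_superset (@mem_ords 3)); vm_compute. Qed.

Definition af_wc := af 3 [:: (0, 2); (1, 0); (1, 1)].

Lemma af_wc_wcomplete : wcomplete af_wc [set x in args 3 [:: 2]].
Proof. by apply/(wcomplete_seqP _ (@mem_ords 3)); vm_compute. Qed.

Lemma af_wc_no_cyc_cogent B : cyc_cogent af_wc B -> ~ [set x in args 3 [:: 2]] \subset B.
Proof. by move: B; apply: (no_cyc_cogent_superset (@mem_ords 3)); vm_compute. Qed.

Lemma af_wc_no_wadm B : wadm af_wc B -> ~ [set x in args 3 [:: 2]] \subset B.
Proof. by move: B; apply: (no_wadm_superset (@mem_ords 3) (card_ord 3)); vm_compute. Qed.

Lemma af_wc_no_stat_tenable B : stat_tenable af_wc B -> ~ [set x in args 3 [:: 2]] \subset B.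
Proof. by move: B; apply: (no_stat_tenable_superset (@mem_ords 3)); vm_compute. Qed.

Definition af_wadm := af 4 [:: (0, 1); (0, 3); (1, 2); (1, 3); (2, 0); (2, 3)].

Lemma af_wadm_wadm : wadm af_wadm [set x in args 4 [:: 3]].
Proof. by rewrite (wadm_seqE _ (@mem_ords 4)) card_ord; vm_compute. Qed.

Lemma af_wadm_no_cyc_cogent B : cyc_cogent af_wadm B -> ~ [set x in args 4 [:: 3]] \subset B.
Proof. by move: B; apply: (no_cyc_cogent_superset (@mem_ords 4)); vm_compute. Qed.

Lemma af_wadm_no_stat_tenable B :
  stat_tenable af_wadm B -> ~ [set x in args 4 [:: 3]] \subset B.
Proof. by move: B; apply: (no_stat_tenable_superset (@mem_ords 4)); vm_compute. Qed.

Definition af_str := af 4 [:: (0, 1); (0, 2); (0, 3); (1, 2); (2, 0)].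

(* Pro answers Opp's only useful move {0} by adding 2. *)
Lemma af_str_str_tenable : str_tenable af_str [set x in args 4 [:: 3]].
Proof.
by apply: (str_tenable_seq (@mem_ords 4)
  (I := [:: (args 4 [:: 2; 3], args 4 [:: 0]); (args 4 [:: 3], [::])])); vm_compute.
Qed.

Lemma af_str_no_cyc_cogent B : cyc_cogent af_str B -> ~ [set x in args 4 [:: 3]] \subset B.
Proof. by move: B; apply: (no_cyc_cogent_superset (@mem_ords 4)); vm_compute. Qed.

Lemma af_str_no_wadm B : wadm af_str B -> ~ [set x in args 4 [:: 3]] \subset B.
Proof. by move: B; apply: (no_wadm_superset (@mem_ords 4) (card_ord 4)); vm_compute. Qed.

Definition af_stat :=
  af 6 [:: (0, 1); (2, 0); (3, 0); (3, 2); (3, 5); (4, 3); (5, 2); (5, 4)].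

Lemma af_stat_stat_tenable : stat_tenable af_stat [set x in args 6 [:: 1]].
Proof. by apply/(stat_tenable_seqP _ (@mem_ords 6)); vm_compute. Qed.

Lemma af_stat_no_tenable B : tenable af_stat B -> ~ [set x in args 6 [:: 1]] \subset B.
Proof.
move: B; apply: (no_tenable_superset (@mem_ords 6) (k := 2) (cands :=
  [:: args 6 [:: 0]; args 6 [:: 0; 4]; args 6 [:: 0; 5]; args 6 [:: 5]; args 6 [:: 4]])).
by vm_compute.
Qed.

Definition af_ten :=
  af 6 [:: (0, 1); (0, 2); (1, 3); (2, 4); (2, 5); (4, 3); (5, 0); (5, 1); (5, 4)].

Lemma af_ten_tenable : tenable af_ten [set x in args 6 [:: 3]].
Proof.
apply: (tenable_seq (@mem_ords 6) (I := [::
  (args 6 [:: 3; 5], args 6 [:: 0; 4]); (args 6 [:: 0; 3], args 6 [:: 1; 2]);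
  (args 6 [:: 3; 5], args 6 [:: 4]); (args 6 [:: 0; 3], args 6 [:: 1]);
  (args 6 [:: 3], [::]); (args 6 [:: 3; 5], args 6 [:: 1; 4])])); by vm_compute.
Qed.

Lemma af_ten_no_str_tenable B : str_tenable af_ten B -> ~ [set x in args 6 [:: 3]] \subset B.
Proof.
move: B; apply: (no_str_tenable_superset (@mem_ords 6) (k := 2)
  (cands := [:: args 6 [:: 1]; args 6 [:: 1; 4]; args 6 [:: 1; 2]; args 6 [:: 4];
               args 6 [:: 0]; args 6 [:: 2]])).
by vm_compute.
Qed.

(** * Separations *)

Definition separates (s t : sem7) : Prop :=
  exists (T : finType) (att : rel T) (A : {set T}),
    interp s T att A /\ forall B, interp t T att B -> ~ A \subset B.

Lemma separates_mono s0 t0 s t :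
  clos_refl_trans sem7 solid s0 s -> clos_refl_trans sem7 edge t t0 ->
  separates s0 t0 -> separates s t.
Proof.
move=> s0s tt0 [T [att [A [As0 noB]]]]; exists T, att, A; split.
  exact: solid_path_refines s0s _ _ _ As0.
move=> B Bt AB; have [C [Ct0 BC]] := edge_refines tt0 Bt.
exact: noB Ct0 (subset_trans AB BC).
Qed.

Lemma separates_of (T : finType) (att : rel T) (A : {set T}) s t :
  interp s T att A -> (forall B, interp t T att B -> ~ A \subset B) -> separates s t.
Proof. by move=> As noB; exists T, att, A. Qed.

Lemma separates_CyCog_WC : separates CyCog WC.
Proof. by apply: separates_of; [exact: af_cyc_cyc_cogent | exact: af_cyc_no_wcomplete]. Qed.

Lemma separates_WC_CyCog : separates WC CyCog.
Proof. by apply: separates_of; [exact: af_wc_wcomplete | exact: af_wc_no_cyc_cogent]. Qed.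

Lemma separates_WC_WAd : separates WC WAd.
Proof. by apply: separates_of; [exact: af_wc_wcomplete | exact: af_wc_no_wadm]. Qed.

Lemma separates_WC_StaTen : separates WC StaTen.
Proof. by apply: separates_of; [exact: af_wc_wcomplete | exact: af_wc_no_stat_tenable]. Qed.

Lemma separates_WAd_CyCog : separates WAd CyCog.
Proof. by apply: separates_of; [exact: af_wadm_wadm | exact: af_wadm_no_cyc_cogent]. Qed.

Lemma separates_WAd_StaTen : separates WAd StaTen.
Proof. by apply: separates_of; [exact: af_wadm_wadm | exact: af_wadm_no_stat_tenable]. Qed.

Lemma separates_StrTen_CyCog : separates StrTen CyCog.
Proof. by apply: separates_of; [exact: af_str_str_tenable | exact: af_str_no_cyc_cogent]. Qed.

Lemma separates_StrTen_WAd : separates StrTen WAd.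
Proof. by apply: separates_of; [exact: af_str_str_tenable | exact: af_str_no_wadm]. Qed.

Lemma separates_StaTen_Ten : separates StaTen Ten.
Proof. by apply: separates_of; [exact: af_stat_stat_tenable | exact: af_stat_no_tenable]. Qed.

Lemma separates_Ten_StrTen : separates Ten StrTen.
Proof. by apply: separates_of; [exact: af_ten_tenable | exact: af_ten_no_str_tenable]. Qed.

Definition strictly_separates (s t : sem7) : Prop :=
  exists (T : finType) (att : rel T) (A : {set T}), interp s T att A /\ ~ interp t T att A.

Lemma separates_strictly s t : separates s t -> strictly_separates s t.
Proof.
by case=> T [att [A [As noB]]]; exists T, att, A; split=> // At; apply: noB At (subxx A).
Qed.

Lemma strictly_separates_solid s0 s t :
  clos_refl_trans sem7 solid s0 s -> strictly_separates s0 t -> strictly_separates s t.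
Proof.
move=> s0s [T [att [A [As0 nAt]]]]; exists T, att, A.
by split=> //; apply: solid_path_refines s0s _ _ _ As0.
Qed.

Definition af_isolated := af 1 [::].

Lemma isolated_cogent : cogent af_isolated set0.
Proof. by apply/cogentP; split=> [|y a]; rewrite ?cf0 ?inE. Qed.

Lemma isolated_not_wcomplete : ~ wcomplete af_isolated set0.
Proof.
case/wcompleteP => _ /(_ ord0 (negbT (in_set0 _))) []; last by move=> y [].
by apply/plusP => -[a]; rewrite inE.
Qed.

Lemma strictly_separates_Cog_WC : strictly_separates Cog WC.
Proof.
by exists _, af_isolated, set0; split; [exact: isolated_cogent | exact: isolated_not_wcomplete].
Qed.

Definition solidb s t :=
  match s, t with
  | Cog, (CyCog | WAd | StrTen) | StrTen, Ten | Ten, StaTen => true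
  | _, _ => false
  end.

Definition dashedb s t := match s, t with (StaTen | WAd), WC => true | _, _ => false end.

Lemma solidbP s t : solidb s t -> solid s t.
Proof. by case: s; case: t => //= _; rewrite /solid; intuition. Qed.

Lemma dashedbP s t : dashedb s t -> dashed s t.
Proof. by case: s; case: t => //= _; rewrite /dashed; intuition. Qed.

Lemma clos_rt_t_neq (A : Type) (R : relation A) x y :
  clos_refl_trans A R x y -> x <> y -> clos_trans A R x y.
Proof.
move=> xy neq; case: (clos_rt_rtn1 _ _ _ _ xy) neq => [//| z t Rzt xz] _.
exact: clos_rt_t (clos_rtn1_rt _ _ _ _ xz) (t_step _ _ _ _ Rzt).
Qed.

Ltac diagram_step :=
  apply: rt_step; first [ apply: solidbP; reflexivity | left; apply: solidbP; reflexivity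
                        | right; apply: dashedbP; reflexivity ].

Ltac diagram_path :=
  first [ apply: rt_refl | diagram_step
        | apply: (rt_trans _ _ _ Cog); [diagram_step | diagram_path]
        | apply: (rt_trans _ _ _ CyCog); [diagram_step | diagram_path]
        | apply: (rt_trans _ _ _ WAd); [diagram_step | diagram_path]
        | apply: (rt_trans _ _ _ WC); [diagram_step | diagram_path]
        | apply: (rt_trans _ _ _ StrTen); [diagram_step | diagram_path]
        | apply: (rt_trans _ _ _ Ten); [diagram_step | diagram_path]
        | apply: (rt_trans _ _ _ StaTen); [diagram_step | diagram_path] ].

Ltac separate_by sep := apply: (separates_mono _ _ sep); diagram_path.

Ltac separate :=
  first [ separate_by separates_CyCog_WC | separate_by separates_WC_CyCog
        | separate_by separates_WC_WAd | separate_by separates_WC_StaTen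
        | separate_by separates_WAd_CyCog | separate_by separates_WAd_StaTen
        | separate_by separates_StrTen_CyCog | separate_by separates_StrTen_WAd
        | separate_by separates_StaTen_Ten | separate_by separates_Ten_StrTen ].

Lemma separation s t : s <> t -> ~ clos_trans sem7 edge s t -> separates s t.
Proof.
move=> st nst; case: s st nst; case: t => st nst;
  first [ by case: st | by case: nst; apply: clos_rt_t_neq st; diagram_path | separate ].
Qed.

Lemma strict_separation s t : s <> t -> ~ clos_trans sem7 solid s t -> strictly_separates s t.
Proof.
move=> st nst; case: s st nst; case: t => st nst;
  first [ by case: st | by case: nst; apply: clos_rt_t_neq st; diagram_path
        | by apply: separates_strictly; separate
        | by apply: (strictly_separates_solid _ strictly_separates_Cog_WC); diagram_path ].
Qed.

Theorem theorem9 :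
  (* (i) *)
  ((forall s t : sem7, solid s t ->
      forall (T : finType) (att : rel T) (A : {set T}),
        interp s T att A -> interp t T att A) /\
   (forall s t : sem7, dashed s t ->
      forall (T : finType) (att : rel T) (A : {set T}),
        interp s T att A -> exists B : {set T}, interp t T att B /\ A \subset B)) /\
  (* (ii) *)
  (forall s t : sem7, s <> t -> ~ clos_trans sem7 edge s t ->
     exists (T : finType) (att : rel T) (A : {set T}),
       interp s T att A /\
       forall B : {set T}, interp t T att B -> ~ (A \subset B)) /\
  (* (iii) *)
  (forall s t : sem7, s <> t -> ~ clos_trans sem7 solid s t ->
     exists (T : finType) (att : rel T) (A : {set T}),
       interp s T att A /\ ~ interp t T att A).
Proof.
split; first by split; [exact: solid_refines | exact: dashed_refines].
by split; [exact: separation | exact: strict_separation].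
Qed.
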